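(* Let $1\le k\le s<r$, $G=\mathrm{Sp}(2r)$, $M=C_G(\tau)\cong\mathrm{Sp}(2s)\times\mathrm{Sp}(2(r-s))$, $P\supseteq B$ the maximal parabolic of $G$ with $G/P\cong\mathrm{IG}(k,2r)$, and $Q=M\cap P$ (so $M/Q\cong\mathrm{IG}(k,2s)$). Then the inclusion $W_M\subseteq W$ induces an inclusion $W_M^Q\subseteq W^P$.
   Context: $V=\mathbb{C}^{2r}$ with ordered basis $e_1,\ldots,e_r,e_r',\ldots,e_1'$ and symplectic form with $(e_i,e_j')=\delta_{ij}$, $(e_i,e_j)=(e_i',e_j')=0$; $G=\mathrm{Sp}(V)$, $T$ the diagonal torus $\mathrm{diag}(a_1,\ldots,a_r,a_r^{-1},\ldots,a_1^{-1})$, $\epsilon_i$ the character giving $a_i$; $B$ the Borel with positive roots $\epsilon_i-\epsilon_j$ ($i<j$), $\epsilon_i+\epsilon_j$ ($i\le j$), simple roots $\alpha_i=\epsilon_i-\epsilon_{i+1}$ ($i<r$), $\alpha_r=2\epsilon_r$. $P$ is the maximal parabolic associated to omitting $\alpha_k$. $\tau=\mathrm{diag}(-1,\ldots,-1,1,\ldots,1,-1,\ldots,-1)\in T$ with $2(r-s)$ entries equal to $1$, $M=C_G(\tau)$, whose roots are the roots $\alpha$ of $G$ with $\alpha(\tau)=1$; its simple roots are $\alpha_1,\ldots,\alpha_{s-1},2\alpha_s+\cdots+2\alpha_{r-1}+\alpha_r$ (first factor) and $\alpha_{s+1},\ldots,\alpha_r$ (second factor). $W^P$ (resp. $W_M^Q$)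 denotes the set of minimal length representatives of $W/W_P$ (resp. $W_M/W_Q$), length in $W_M$ measured with respect to the simple reflections of $M$. *)

From HB Require Import structures.
From mathcomp Require Import all_boot all_order all_algebra all_fingroup.
Set Implicit Arguments. Unset Strict Implicit. Unset Printing Implicit Defensive.
Import Order.TTheory GRing.Theory Num.Theory.
Local Open Scope ring_scope.

(* Basis of V = C^{2r}: (i, false) stands for e_{i+1}, (i, true) for e'_{i+1}
   (0-indexed i : 'I_r). *)
Definition idx (r : nat) := ('I_r * bool)%type.

(* Characters of T, i.e. X(T) = Z^r : lambda = sum_i lambda_i eps_i. *)
Definition weight (r : nat) := {ffun 'I_r -> int}.

Definition eps (r : nat) (i : nat) : weight r := [ffun j : 'I_r => ((j : nat) == i)%:Z].

Definition wt (r : nat) (x : idx r) : weight r :=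
  if x.2 then - eps r x.1 else eps r x.1.

Definition flip (r : nat) (x : idx r) : idx r := (x.1, ~~ x.2).

(* W = N_G(T)/T, realised as its faithful action on the weight lines of V:
   the permutations of the basis lines preserving the pairing e_i <-> e'_i. *)
Definition Weyl (r : nat) : {set {perm idx r}} :=
  [set w : {perm idx r} | [forall x, w (flip x) == flip (w x)]].

Definition dotw (r : nat) (l m : weight r) : int := \sum_(i < r) l i * m i.

Definition sref (r : nat) (a l : weight r) : weight r :=
  l - a *~ divz (2 * dotw l a) (dotw a a).

Definition reflset (r : nat) (a : weight r) : {set {perm idx r}} :=
  [set w in Weyl r | [forall x, wt (w x) == sref a (wt x)]].

(* Roots of G: +-eps_i +- eps_j (i <> j) and +-2 eps_i, parametrised by
   (i, j, sign_i, sign_j). *)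
Definition rootOf (r : nat) (p : 'I_r * 'I_r * bool * bool) : weight r :=
  (if p.1.2 then - eps r p.1.1.1 else eps r p.1.1.1)
  + (if p.2 then - eps r p.1.1.2 else eps r p.1.1.2).
Definition rootParam (r : nat) (p : 'I_r * 'I_r * bool * bool) : bool :=
  (p.1.1.1 == p.1.1.2) ==> (p.1.2 == p.2).

Definition alpha (r : nat) (i : nat) : weight r :=
  if (i.+1 < r)%N then eps r i - eps r i.+1 else eps r i *+ 2.

Definition Ssimple (r : nat) : {set {perm idx r}} :=
  \bigcup_(i < r) reflset (alpha r i).

(* W_P, P the maximal parabolic omitting alpha_k (1-indexed k) *)
Definition WP (r k : nat) : {set {perm idx r}} :=
  <<\bigcup_(i < r | (i.+1 != k)%N) reflset (alpha r i)>>%g.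

(* tau = diag(-1 (s times), 1 (2(r-s) times), -1 (s times)); its value on
   the character lambda is prod_i tau_i^{lambda_i}, tau_i = -1 for i<s, 1 else *)
Definition tau (r s : nat) (i : 'I_r) : int := if (i < s)%N then -1 else 1.
Definition chartau (r s : nat) (l : weight r) : int :=
  \prod_(i < r) (tau s i) ^ (l i).

Definition WM (r s : nat) : {set {perm idx r}} :=
  <<\bigcup_(p : 'I_r * 'I_r * bool * bool | rootParam p && (chartau s (rootOf p) == 1%R)) reflset (rootOf p)>>%g.

Definition msimple (r s : nat) : seq (weight r) :=
  [seq alpha r i | i <- iota 0 s.-1]
  ++ [:: (\sum_(s.-1 <= i < r.-1) alpha r i) *+ 2 + alpha r r.-1]
  ++ [seq alpha r i | i <- iota s (r - s)].

Definition SM (r s : nat) : {set {perm idx r}} :=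
  \bigcup_(b <- msimple r s) reflset b.

Definition WQ (r s k : nat) : {set {perm idx r}} := WM r s :&: WP r k.

Definition word_of (gT : finGroupType) (S : {set gT}) (w : gT) (n : nat) : Prop :=
  exists t : seq gT, [/\ all (mem S) t, size t = n & (\prod_(x <- t) x)%g = w].

Definition minrep (gT : finGroupType) (S H : {set gT}) (w : gT) : Prop :=
  forall v, v \in (w *: H)%g -> forall n, word_of S v n ->
    exists2 m, (m <= n)%N & word_of S w m.

Definition in_WP_min (r k : nat) (w : {perm idx r}) : Prop :=
  w \in Weyl r /\ minrep (Ssimple r) (WP r k) w.

Definition in_WMQ_min (r s k : nat) (w : {perm idx r}) : Prop :=
  w \in WM r s /\ minrep (SM r s) (WQ r s k) w.

(* Minimality in a coset is read off inversions.  Order the weights of V by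
   the regular coweight ht; then the number ninv b w of positive roots of
   W(C_b) x W(C_{r-b}) made negative by w (each counted twice) moves by exactly
   2 under right multiplication by a simple reflection, and drops for some
   simple reflection unless w = 1, so it is twice the Coxeter length.  If w is
   minimal in w W_Q for the length of W_M, its ascents at the simple
   reflections of M lying in W_P say that ht (w^-1 e_i) decreases along
   i = 1..k and along i = k+1..s and i = s+1..r, and is positive at i = s and
   i = r; since w preserves the two blocks, ht (w^-1 e_i) then decreases and
   stays positive along all of k+1..r.  So w^-1 keeps the positive roots of the
   Levi factor of P positive, and right multiplication by any element of W_P
   can only create inversions: w is minimal in w W_P. *)

From mathcomp Require Import all_boot all_order all_algebra all_fingroup.
From mathcomp Require Import zify.
Set Implicit Arguments. Unset Strict Implicit. Unset Printing Implicit Defensive.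
Import Order.TTheory GRing.Theory Num.Theory.
Local Open Scope ring_scope.
Local Open Scope group_scope.

Ltac case_nat_eqs :=
  repeat match goal with |- context[nat_of_ord ?a == nat_of_ord ?b] =>
    case: (@eqP nat a b) => ? /= end.

Lemma mem_bigcup_seq (T : finType) (I : eqType) (l : seq I) (F : I -> {set T}) x :
  (x \in \bigcup_(i <- l) F i) = has (fun i => x \in F i) l.
Proof. by elim: l => [|a l IHl]; rewrite ?big_nil ?big_cons ?inE ?IHl. Qed.

Lemma decreasing_segment n (F : 'I_n -> int) p q :
  (forall i j : 'I_n, j = i.+1 :> nat -> (p <= i)%N -> (j < q)%N -> F j < F i) ->
  forall i j : 'I_n, (p <= i < j)%N -> (j < q)%N -> F j < F i.
Proof.
move=> step i j /andP[pi ij] jq.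
pose G m := if insub m is Some l then F l else 0.
have GE (l : 'I_n) : G l = F l by rewrite /G valK.
have Gdec : {in [pred m | (p <= m < minn q n)%N] &, {homo G : a c /~ (a < c)%O}}.
  apply: Order.NatMonotonyTheory.nhomo_ltn_lt_in => [a c | m]; rewrite !inE.
    by move=> ? ? k; rewrite !ltEnat inE /=; lia.
  move=> /andP[pm _] /andP[_ mq].
  have mn : (m < n)%N by lia.
  have m1n : (m.+1 < n)%N by lia.
  rewrite -[G m]/(G (Ordinal mn)) -[G m.+1]/(G (Ordinal m1n)) !GE.
  by apply: step => //=; lia.
by rewrite -!GE; apply: Gdec; rewrite ?inE; have := ltn_ord j; lia.
Qed.

Section SignedPermutations.
Variable r : nat.
Implicit Types (b : nat) (I J : 'I_r) (x y z : idx r) (u w c : {perm idx r}).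

(* A regular dominant coweight: e_1 > ... > e_r > 0 > e'_r > ... > e'_1, so
   that a nonzero wt x + wt y is a positive root iff 0 < ht x + ht y. *)
Definition ht x : int := if x.2 then - (r - x.1)%N%:Z else (r - x.1)%N%:Z.

Lemma flipK : involutive (@flip r).
Proof. by case=> i b; rewrite /flip /= negbK. Qed.

Lemma ht_flip x : ht (flip x) = - ht x.
Proof. by case: x => i []; rewrite /ht /flip /= ?opprK. Qed.

Lemma ht_inj : injective ht.
Proof.
move=> [i e] [j e']; rewrite /ht /=; have := ltn_ord i; have := ltn_ord j.
case: e e' => [] [] /= jr ir E; try lia.
all: by rewrite (_ : i = j) //; apply: val_inj => /=; lia.
Qed.

Lemma ht_lt0 x : (ht x < 0) = x.2.
Proof. by case: x => i [] /=; rewrite /ht /=; have := ltn_ord i; lia. Qed.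

Lemma ht_gt0 x : (0 < ht x) = ~~ x.2.
Proof. by case: x => i [] /=; rewrite /ht /=; have := ltn_ord i; lia. Qed.

Lemma ht_neq0 x : ht x != 0.
Proof. by rewrite neq_lt ht_lt0 ht_gt0 orbN. Qed.

(* The Weyl group W(C_b) x W(C_{r-b}) of Sp(2b) x Sp(2(r-b)), which is W_M for
   b = s and W for b = 0. *)
Definition Wblock b : {set {perm idx r}} :=
  [set w in Weyl r | [forall x, ((w x).1 < b)%N == (x.1 < b)%N]].

Lemma WeylP w : reflect (forall x, w (flip x) = flip (w x)) (w \in Weyl r).
Proof. by rewrite inE; apply: (iffP forallP) => H x; apply/eqP. Qed.

Lemma WblockP b w :
  reflect (w \in Weyl r /\ forall x, ((w x).1 < b)%N = (x.1 < b)%N) (w \in Wblock b).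
Proof.
apply: (iffP setIdP) => -[? H]; split=> //.
  by move=> x; have /eqP := forallP H x.
by apply/forallP=> x; apply/eqP.
Qed.

Lemma Weyl_flip w x : w \in Weyl r -> w (flip x) = flip (w x).
Proof. by move/WeylP. Qed.

Lemma Wblock_Weyl b w : w \in Wblock b -> w \in Weyl r.
Proof. by case/WblockP. Qed.

Lemma Wblock_block b w x : w \in Wblock b -> ((w x).1 < b)%N = (x.1 < b)%N.
Proof. by case/WblockP=> _; apply. Qed.

Lemma Wblock_group_set b : group_set (Wblock b).
Proof.
apply/group_setP; split.
  by apply/WblockP; split=> [|x]; [apply/WeylP => x|]; rewrite !perm1.
move=> u v /WblockP[/WeylP u1 u2] /WblockP[/WeylP v1 v2].
by apply/WblockP; split=> [|x]; [apply/WeylP => x|]; rewrite !permM ?u1 ?v1 ?v2.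
Qed.
Canonical Wblock_group b := Group (Wblock_group_set b).

Lemma Weyl_Wblock0 : Weyl r = Wblock 0.
Proof. by apply/setP=> w; apply/idP/WblockP=> [|[]//]; split=> // x; rewrite !ltn0. Qed.

Definition swap_idx (I J : 'I_r) x : idx r :=
  (if x.1 == I then J else if x.1 == J then I else x.1, x.2).

Lemma swap_idxK I J : involutive (swap_idx I J).
Proof.
case=> X b; rewrite /swap_idx /=; congr pair.
case: (eqVneq X I) => [->|XI]; first by rewrite eqxx; case: eqVneq => [->|_]; rewrite ?eqxx.
case: (eqVneq X J) => [->|XJ]; first by rewrite eqxx.
by rewrite (negbTE XI) (negbTE XJ).
Qed.

Definition swap_perm I J : {perm idx r} := perm (can_inj (swap_idxK I J)).

Lemma swap_permE I J x : swap_perm I J x = swap_idx I J x.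
Proof. by rewrite permE. Qed.

Definition sign_perm (J : 'I_r) : {perm idx r} := tperm (J, false) (J, true).

Lemma sign_permE J x : sign_perm J x = if x.1 == J then flip x else x.
Proof.
case: x => X b; rewrite /sign_perm /=.
case: (eqVneq X J) => [->|XJ]; first by case: b; rewrite ?tpermL ?tpermR.
by rewrite tpermD // xpair_eqE eq_sym (negbTE XJ).
Qed.

Lemma swap_perm_invol I J : swap_perm I J * swap_perm I J = 1.
Proof. by apply/permP=> x; rewrite permM perm1 !swap_permE swap_idxK. Qed.

Lemma sign_perm_invol J : sign_perm J * sign_perm J = 1.
Proof. exact: tperm2. Qed.

Lemma swap_perm_Wblock b I J : (I < b)%N = (J < b)%N -> swap_perm I J \in Wblock b.
Proof.
move=> IJb; apply/WblockP; split=> [|x]; first by apply/WeylP=> x; rewrite !swap_permE.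
rewrite swap_permE /swap_idx /=.
by case: (eqVneq x.1 I) => [->|_]; [|case: (eqVneq x.1 J) => [->|]].
Qed.

Lemma sign_perm_Wblock b J : sign_perm J \in Wblock b.
Proof.
apply/WblockP; split=> [|x]; last by rewrite sign_permE; case: ifP.
by apply/WeylP=> x; rewrite !sign_permE /=; case: ifP => //=; rewrite flipK.
Qed.

Definition simple_refls b : {set {perm idx r}} :=
  [set c | [exists I : 'I_r, exists J : 'I_r,
              [&& J == I.+1 :> nat, I.+1 != b & c == swap_perm I J]]
        || [exists J : 'I_r, ((J.+1 == b) || (J.+1 == r)) && (c == sign_perm J)]].

Variant simple_refl_spec b : {perm idx r} -> Prop :=
  | SimpleSwap (I J : 'I_r) of J = I.+1 :> nat & I.+1 != b :
      simple_refl_spec b (swap_perm I J)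
  | SimpleSign (J : 'I_r) of (J.+1 == b) || (J.+1 == r) :
      simple_refl_spec b (sign_perm J).

Lemma simple_reflsP b c : c \in simple_refls b -> simple_refl_spec b c.
Proof.
rewrite inE => /orP[/existsP[I /existsP[J /and3P[/eqP ? ? /eqP ->]]]|].
  exact: SimpleSwap.
by case/existsP=> J /andP[? /eqP ->]; apply: SimpleSign.
Qed.

Lemma simple_refls_swap b I J :
  J = I.+1 :> nat -> I.+1 != b -> swap_perm I J \in simple_refls b.
Proof.
by move=> /eqP JI Ib; rewrite inE; apply/orP; left; apply/existsP; exists I;
   apply/existsP; exists J; rewrite JI Ib eqxx.
Qed.

Lemma simple_refls_sign b J :
  (J.+1 == b) || (J.+1 == r) -> sign_perm J \in simple_refls b.
Proof. by move=> Jb; rewrite inE; apply/orP; right; apply/existsP; exists J; rewrite Jb eqxx. Qed.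

Lemma simple_refls_Wblock b : simple_refls b \subset Wblock b.
Proof.
apply/subsetP=> c /simple_reflsP[I J JI Ib|J _]; last exact: sign_perm_Wblock.
by apply: swap_perm_Wblock; move: Ib; rewrite JI; lia.
Qed.

Lemma simple_refls_invol b c : c \in simple_refls b -> c * c = 1.
Proof. by case/simple_reflsP=> *; rewrite ?swap_perm_invol ?sign_perm_invol. Qed.

Lemma block_end_max b (J y : 'I_r) :
  (J.+1 == b) || (J.+1 == r) -> (y < b)%N = (J < b)%N -> (y <= J)%N.
Proof.
case/orP=> /eqP JS; last by have := ltn_ord y; lia.
by rewrite -JS !ltnS leqnn => ->.
Qed.

Lemma swap_idxL I J (e : bool) : swap_idx I J (I, e) = (J, e).
Proof. by rewrite /swap_idx /= eqxx. Qed.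

Lemma swap_idxR I J (e : bool) : I != J -> swap_idx I J (J, e) = (I, e).
Proof. by move=> IJ; rewrite /swap_idx /= eq_sym (negbTE IJ) eqxx. Qed.

Lemma swap_ht_add_lt0 I J x y : J = I.+1 :> nat ->
  (x.2 == y.2) || ~~ [|| (x.1 == I) && (y.1 == J) | (x.1 == J) && (y.1 == I)] ->
  (ht (swap_idx I J x) + ht (swap_idx I J y) < 0) = (ht x + ht y < 0).
Proof.
case: x y => [X e] [Y e'] JI; rewrite /swap_idx /ht /= -!val_eqE /=.
have := ltn_ord X; have := ltn_ord Y; have := ltn_ord J.
by case: e e' => [] []; case_nat_eqs; move=> *; apply/idP/idP; lia.
Qed.

Lemma sign_ht_add_lt0 J x y :
  (x.1 == J -> y.1 <= J)%N -> (y.1 == J -> x.1 <= J)%N ->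
  ~~ [&& x.1 == J, y.1 == J & x.2 == y.2] ->
  (ht (sign_perm J x) + ht (sign_perm J y) < 0) = (ht x + ht y < 0).
Proof.
case: x y => [X e] [Y e']; rewrite !sign_permE /flip /ht /= -!val_eqE /=.
have := ltn_ord X; have := ltn_ord Y; have := ltn_ord J.
by case: e e' => [] []; case_nat_eqs; move=> *; apply/idP/idP; lia.
Qed.

(* Every positive root alpha with w alpha < 0 is counted twice: through the two
   ordered pairs (x, y) with wt x + wt y = alpha, or through (x, x) and x when
   alpha = 2 wt x.  Hence ninv b w is twice the length of w in W(C_b) x W(C_{r-b}). *)
Definition inv_pairs b w : {set idx r * idx r} :=
  [set p : idx r * idx r | [&& (p.1.1 < b)%N == (p.2.1 < b)%N, 0 < ht p.1 + ht p.2
             & ht (w p.1) + ht (w p.2) < 0]].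

Definition inv_points w : {set idx r} := [set x | (0 < ht x) && (ht (w x) < 0)].

Definition ninv b w : nat := #|inv_pairs b w| + #|inv_points w|.

Lemma ninv1 b : ninv b 1 = 0%N.
Proof.
rewrite /ninv; apply/eqP; rewrite addn_eq0 !cards_eq0; apply/andP; split; apply/eqP/setP.
  by case=> x y; rewrite !inE !perm1 /=; apply/negbTE/and3P => -[_]; lia.
by move=> x; rewrite !inE !perm1 /=; apply/negbTE/andP => -[]; lia.
Qed.

Lemma ht_inv_true u (i : 'I_r) : u \in Weyl r -> ht (u (i, true)) = - ht (u (i, false)).
Proof. by move=> uW; rewrite -[(i, true)]/(flip (i, false)) (Weyl_flip _ uW) ht_flip. Qed.

Lemma inv_pairs_mul_swap b w I J : w \in Wblock b -> J = I.+1 :> nat -> I.+1 != b ->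
  ht (w^-1 (I, false)) < ht (w^-1 (J, false)) ->
  inv_pairs b w = (w^-1 (I, true), w^-1 (J, false))
                  |: ((w^-1 (J, false), w^-1 (I, true)) |: inv_pairs b (w * swap_perm I J)).
Proof.
move=> wB JI Ib ltIJ; set c := swap_perm I J.
have wiB : w^-1 \in Wblock b by rewrite groupV.
have wiW := Wblock_Weyl wiB.
have same X Y : (X, Y) != ((I, true), (J, false)) -> (X, Y) != ((J, false), (I, true)) ->
    0 < ht (w^-1 X) + ht (w^-1 Y) -> (ht (c X) + ht (c Y) < 0) = (ht X + ht Y < 0).
  move=> nPQ nQP pos; rewrite !swap_permE swap_ht_add_lt0 //.
  case: X Y nPQ nQP pos => [X []] [Y []] //=; rewrite !xpair_eqE !andbT !andbF /=.
    move=> nPQ _ pos; rewrite (negbTE nPQ) /=; apply: contraTN pos => /andP[/eqP-> /eqP->].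
    by rewrite ht_inv_true //; lia.
  move=> _ nQP pos; rewrite (negbTE nQP) orbF; apply: contraTN pos => /andP[/eqP-> /eqP->].
  by rewrite ht_inv_true //; lia.
set p := w^-1 (I, true); set q := w^-1 (J, false).
have htIJ : ht (I, true) + ht (J, false) < 0 by rewrite /ht /=; have := ltn_ord J; lia.
have pq_pos : 0 < ht p + ht q by rewrite /p /q ht_inv_true //; lia.
have pq_block : (p.1 < b)%N = (q.1 < b)%N.
  by rewrite !(Wblock_block _ wiB) /=; move: Ib; rewrite JI; lia.
apply/setP=> -[x y]; rewrite !inE /= !permM.
case: (eqVneq (x, y) (p, q)) => [[-> ->] | nPQ] /=.
  by rewrite pq_block eqxx pq_pos !permKV.
case: (eqVneq (x, y) (q, p)) => [[-> ->] | nQP] /=.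
  by rewrite pq_block eqxx addrC pq_pos !permKV addrC.
case: (boolP (0 < ht x + ht y)) => pos; rewrite /= ?andbF //.
rewrite same ?permK //.
  by apply: contra_neq nPQ => -[wx wy]; rewrite /p /q -wx -wy !permK.
by apply: contra_neq nQP => -[wx wy]; rewrite /p /q -wx -wy !permK.
Qed.

Lemma ninv_mul_swap b w I J : w \in Wblock b -> J = I.+1 :> nat -> I.+1 != b ->
  ht (w^-1 (I, false)) < ht (w^-1 (J, false)) ->
  ninv b w = (ninv b (w * swap_perm I J)).+2.
Proof.
move=> wB JI Ib ltIJ; rewrite /ninv (inv_pairs_mul_swap wB JI Ib ltIJ).
set c := swap_perm I J; set p := w^-1 (I, true); set q := w^-1 (J, false).
have IJ : I != J by apply/eqP=> E; move: JI; rewrite E; lia.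
have pq : p != q by apply: contra_neq IJ => /(congr1 w); rewrite !permKV => -[].
have cpq : (ht (c (w p)) + ht (c (w q)) < 0) = false.
  by rewrite !permKV !swap_permE swap_idxL swap_idxR // /ht /=; have := ltn_ord J; lia.
have not_pq : (p, q) \notin (q, p) |: inv_pairs b (w * c).
  by rewrite !inE /= !permM cpq xpair_eqE (negbTE pq) !andbF.
have not_qp : (q, p) \notin inv_pairs b (w * c).
  by rewrite !inE /= !permM [ht (c (w q)) + _]addrC cpq !andbF.
have pointsE : inv_points (w * c) = inv_points w.
  by apply/setP=> x; rewrite !inE permM swap_permE !ht_lt0.
by rewrite pointsE !cardsU1 not_pq not_qp.
Qed.

Lemma inv_pairs_mul_sign b w J : w \in Wblock b -> (J.+1 == b) || (J.+1 == r) ->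
  ht (w^-1 (J, false)) < 0 ->
  inv_pairs b w = (w^-1 (J, true), w^-1 (J, true)) |: inv_pairs b (w * sign_perm J).
Proof.
move=> wB Jend ltJ; set c := sign_perm J.
have wiW : w^-1 \in Weyl r by apply: Wblock_Weyl (groupVr wB).
have same X Y : (X, Y) != ((J, true), (J, true)) -> (X.1 < b)%N = (Y.1 < b)%N ->
    0 < ht (w^-1 X) + ht (w^-1 Y) -> (ht (c X) + ht (c Y) < 0) = (ht X + ht Y < 0).
  move=> nPP XYb pos; rewrite sign_ht_add_lt0 //.
  - by move=> /eqP XJ; apply: (block_end_max Jend); rewrite -XJ XYb.
  - by move=> /eqP YJ; apply: (block_end_max Jend); rewrite -YJ XYb.
  apply/and3P=> -[/eqP XJ /eqP YJ /eqP XY2]; move: nPP pos.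
  rewrite [X]surjective_pairing [Y]surjective_pairing XJ YJ -XY2.
  case: X.2 => [|_ pos]; first by rewrite eqxx.
  have {}pos : 0 < ht (w^-1 (J, false)) + ht (w^-1 (J, false)) := pos.
  by have := ltJ; lia.
set p := w^-1 (J, true).
have p_pos : 0 < ht p by rewrite /p ht_inv_true //; lia.
apply/setP=> -[x y]; rewrite !inE /= !permM.
case: (eqVneq (x, y) (p, p)) => [[-> ->] | nPP] /=.
  rewrite eqxx permKV; apply/and3P; split=> //; first exact: addr_gt0.
  by rewrite /ht /=; have := ltn_ord J; lia.
case: (eqVneq (x.1 < b)%N (y.1 < b)%N) => //= xyb.
case: (boolP (0 < ht x + ht y)) => //= pos.
rewrite same ?permK ?(Wblock_block _ wB) //.
apply: contra_neq nPP => -[wx wy].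
have xy : x = y by apply: (@perm_inj _ w); rewrite wx wy.
by rewrite /p -wx permK -xy.
Qed.

Lemma inv_points_mul_sign w J : w \in Weyl r -> ht (w^-1 (J, false)) < 0 ->
  inv_points w = w^-1 (J, true) |: inv_points (w * sign_perm J).
Proof.
move=> wW ltJ; have wiW : w^-1 \in Weyl r by move: wW; rewrite !Weyl_Wblock0 groupV.
set p := w^-1 (J, true); have p_pos : 0 < ht p by rewrite /p ht_inv_true //; lia.
apply/setP=> x; rewrite !inE permM sign_permE.
case: (eqVneq x p) => [-> | nP] /=; first by rewrite p_pos permKV ht_lt0.
case: (eqVneq (w x).1 J) => // XJ; rewrite !ht_lt0 /=.
case wx2: (w x).2; first by case/eqP: nP; rewrite /p -XJ -wx2 -surjective_pairing permK.
have xfp : x = flip p.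
  by rewrite /p -(Weyl_flip _ wiW) /flip /= -XJ -wx2 -surjective_pairing permK.
by rewrite xfp ht_flip; lia.
Qed.

Lemma ninv_mul_sign b w J : w \in Wblock b -> (J.+1 == b) || (J.+1 == r) ->
  ht (w^-1 (J, false)) < 0 -> ninv b w = (ninv b (w * sign_perm J)).+2.
Proof.
move=> wB Jend ltJ; rewrite /ninv (inv_pairs_mul_sign wB Jend ltJ).
rewrite (inv_points_mul_sign (Wblock_Weyl wB) ltJ).
set p := w^-1 (J, true).
have cwp : sign_perm J (w p) = (J, false) by rewrite permKV sign_permE eqxx.
have not_pp : (p, p) \notin inv_pairs b (w * sign_perm J).
  by rewrite !inE /= !permM cwp !andbF.
have not_p : p \notin inv_points (w * sign_perm J) by rewrite !inE permM cwp ht_lt0 andbF.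
by rewrite !cardsU1 not_pp not_p !add1n addSn addnS.
Qed.

Lemma invol_invg c : c * c = 1 -> c^-1 = c.
Proof. by move=> cc; apply/eqP; rewrite eq_invg_mul cc. Qed.

Lemma ninv_mul_simple b w c : w \in Wblock b -> c \in simple_refls b ->
  ninv b w = (ninv b (w * c)).+2 \/ ninv b (w * c) = (ninv b w).+2.
Proof.
move=> wB cS; have cB := subsetP (simple_refls_Wblock b) c cS.
have wcB : w * c \in Wblock b by rewrite groupM.
have wiW : w^-1 \in Weyl r by apply: Wblock_Weyl (groupVr wB).
have wcc : w * c * c = w by rewrite -mulgA (simple_refls_invol cS) mulg1.
have wcV x : (w * c)^-1 x = w^-1 (c x).
  by rewrite invMg permM (invol_invg (simple_refls_invol cS)).
case: (simple_reflsP cS) wcB wcc wcV => [I J JI Ib | J Jend] wcB wcc wcV.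
  have IJ : I != J by apply/eqP=> E; move: JI; rewrite E; lia.
  case: (ltgtP (ht (w^-1 (I, false))) (ht (w^-1 (J, false)))) => [lt|gt|].
  - by left; apply: ninv_mul_swap.
  - right; rewrite -{2}wcc; apply: ninv_mul_swap => //.
    by rewrite !wcV !swap_permE swap_idxL swap_idxR.
  by move/ht_inj/perm_inj=> -[] /eqP; rewrite (negbTE IJ).
case: (ltgtP (ht (w^-1 (J, false))) 0) => [lt|gt|/eqP]; last by rewrite (negbTE (ht_neq0 _)).
  by left; apply: ninv_mul_sign.
right; rewrite -{2}wcc; apply: ninv_mul_sign => //.
by rewrite wcV sign_permE eqxx -[flip _]/(J, true) ht_inv_true // oppr_lt0.
Qed.

Lemma word_Wblock b w n : word_of (simple_refls b) w n -> w \in Wblock b.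
Proof.
case=> t [tS _ <-]; rewrite big_seq; apply: group_prod => c /(allP tS).
exact: (subsetP (simple_refls_Wblock b)).
Qed.

Lemma ninv_word_le b w n : word_of (simple_refls b) w n -> (ninv b w <= 2 * n)%N.
Proof.
case=> t [+ <- <-]; elim/last_ind: t => [|t c IHt]; first by rewrite big_nil ninv1.
rewrite all_rcons => /andP[cS tS]; rewrite -cats1 big_cat big_seq1 size_cat /= addn1.
have := IHt tS; set v := \prod_(x <- t) x.
have vB : v \in Wblock b by apply: (@word_Wblock _ _ (size t)); exists t.
move=> IH; rewrite mulnSr addn2.
case: (ninv_mul_simple vB cS) => [E | ->]; last by rewrite !ltnS.
have le_vc : (ninv b (v * c) <= ninv b v)%N by rewrite E; apply/leqW/leqnSn.
by apply: leq_trans (leq_trans le_vc IH) _; apply/leqW/leqnSn.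
Qed.

(* For ht x < ht y, levi_pair k x y says that wt y - wt x is a positive root of
   the Levi factor GL(k) x Sp(2(r-k)) of P. *)
Definition levi_pair k x y : bool :=
  ((k <= x.1) && (k <= y.1))%N || [&& (x.1 < k)%N, (y.1 < k)%N & x.2 == y.2].

Definition levi_increasing k u : Prop :=
  forall x y, levi_pair k x y -> ht x < ht y -> ht (u x) < ht (u y).

Lemma ht_Weyl u (i : 'I_r) (e : bool) : u \in Weyl r ->
  ht (u (i, e)) = if e then - ht (u (i, false)) else ht (u (i, false)).
Proof. by case: e => // uW; apply: ht_inv_true. Qed.

Lemma levi_increasingP k u : u \in Weyl r ->
  (forall i j : 'I_r, (i < j < k)%N -> ht (u (j, false)) < ht (u (i, false))) ->
  (forall i j : 'I_r, (k <= i < j)%N -> ht (u (j, false)) < ht (u (i, false))) ->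
  (forall i : 'I_r, (k <= i)%N -> 0 < ht (u (i, false))) ->
  levi_increasing k u.
Proof.
move=> uW small large pos [i e] [j e']; rewrite /levi_pair /= => lp.
rewrite [ht (i, e)]/ht [ht (j, e')]/ht (ht_Weyl i e uW) (ht_Weyl j e' uW) /=.
have := ltn_ord i; have := ltn_ord j.
case: (ltngtP i j) => [ij | ji | /val_inj ij]; last first.
- subst j; case/orP: lp => [/andP[ki _] | /and3P[_ _ /eqP <-]]; last by lia.
  by have := pos i ki; case: e e' => [] []; lia.
- have Fij : ht (u (i, false)) < ht (u (j, false)).
    by case/orP: lp => [/andP[_ kj] | /and3P[ik _ _]]; [apply: large | apply: small]; lia.
  case/orP: lp => [/andP[ki kj] | /and3P[_ _ /eqP <-]]; last by case: e; lia.
  by have := pos i ki; have := pos j kj; case: e e' => [] []; lia.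
have Fji : ht (u (j, false)) < ht (u (i, false)).
  by case/orP: lp => [/andP[ki _] | /and3P[_ jk _]]; [apply: large | apply: small]; lia.
case/orP: lp => [/andP[ki kj] | /and3P[_ _ /eqP <-]]; last by case: e; lia.
by have := pos i ki; have := pos j kj; case: e e' => [] []; lia.
Qed.

Lemma ascents_levi_increasing b k u : (k <= b <= r)%N -> u \in Wblock b ->
  (forall I J : 'I_r, J = I.+1 :> nat -> I.+1 != b -> I.+1 != k ->
     ht (u (J, false)) < ht (u (I, false))) ->
  (forall J : 'I_r, (J.+1 == b) || (J.+1 == r) -> (k <= J)%N -> 0 < ht (u (J, false))) ->
  levi_increasing k u.
Proof.
move=> /andP[kb br] uB step endpos; have uW := Wblock_Weyl uB.
pose F (i : 'I_r) := ht (u (i, false)).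
have decr p q : (forall m, (p < m < q)%N -> (m != b) && (m != k)) ->
    forall i j : 'I_r, (p <= i < j)%N -> (j < q)%N -> F j < F i.
  move=> nob; apply: decreasing_segment => I J JI pI Jq.
  by apply: step => //; have := nob J; rewrite JI; lia.
have pos (i : 'I_r) : (k <= i)%N -> 0 < F i.
  move=> ki; case: (ltnP i b) => ib.
    have Jr : (b.-1 < r)%N by lia.
    have FJ : 0 < F (Ordinal Jr) by apply: endpos => /=; lia.
    have [-> // | iJ] := eqVneq i (Ordinal Jr); have iJ' : (i : nat) != b.-1 := iJ.
    by apply: lt_trans FJ (decr k b _ i (Ordinal Jr) _ _) => /=; lia.
  have Jr : (r.-1 < r)%N by have := ltn_ord i; lia.
  have FJ : 0 < F (Ordinal Jr) by apply: endpos => /=; have := ltn_ord i; lia.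
  have [-> // | iJ] := eqVneq i (Ordinal Jr); have iJ' : (i : nat) != r.-1 := iJ.
  by apply: lt_trans FJ (decr b r _ i (Ordinal Jr) _ _) => /=; have := ltn_ord i; lia.
have cross (i j : 'I_r) : (k <= i)%N -> (i < b <= j)%N -> F j < F i.
  move=> ki /andP[ib bj]; have := pos i ki; have := pos j (leq_trans kb bj).
  have := Wblock_block (i, false) uB; have := Wblock_block (j, false) uB; rewrite /F /=.
  case: (u (i, false)) (u (j, false)) => [a e] [a' e'] /=; rewrite /ht /=.
  by case: e e' => [] [] /=; lia.
apply: levi_increasingP => // [i j /andP[ij jk] | i j /andP[ki ij]].
  by apply: (decr 0 k) => //; lia.
case: (ltnP j b) => jb; first by apply: (decr k b) => //; lia.
case: (ltnP i b) => ib; first by apply: cross; lia.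
by apply: (decr b r) => //; lia.
Qed.

Lemma ht_increasing_perm1 u : (forall x y, ht x < ht y -> ht (u x) < ht (u y)) -> u = 1.
Proof.
move=> incr; pose rank x := #|[set y | ht y < ht x]|.
have lt_rank x y : ht x < ht y -> (rank x < rank y)%N.
  move=> xy; apply: proper_card; apply/properP; split.
    by apply/subsetP=> z; rewrite !inE => /lt_trans; apply.
  by exists x; rewrite !inE ?xy ?ltxx.
have rank_inj : injective rank.
  move=> x y; case: (ltgtP (ht x) (ht y)) => [/lt_rank|/lt_rank|/ht_inj //]; lia.
have incrE x y : (ht (u y) < ht (u x)) = (ht y < ht x).
  apply/idP/idP=> [uyx | /incr //].
  case: (ltgtP (ht y) (ht x)) => // [xy | /ht_inj yx]; last by move: uyx; rewrite yx ltxx.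
  by have := lt_trans uyx (incr _ _ xy); rewrite ltxx.
apply/permP=> x; rewrite perm1; apply: rank_inj.
rewrite /rank -[RHS](card_imset _ (@perm_inj _ u)); apply: eq_card => z.
by rewrite -[z](permKV u) mem_imset ?inE ?incrE //; apply: perm_inj.
Qed.

Lemma nondescent_levi_increasing b k w : (k <= b <= r)%N -> w \in Wblock b ->
  (forall I J : 'I_r, J = I.+1 :> nat -> I.+1 != b -> I.+1 != k ->
     ninv b w != (ninv b (w * swap_perm I J)).+2) ->
  (forall J : 'I_r, (J.+1 == b) || (J.+1 == r) -> (k <= J)%N ->
     ninv b w != (ninv b (w * sign_perm J)).+2) ->
  levi_increasing k w^-1.
Proof.
move=> kbr wB swap_asc sign_asc; apply: (ascents_levi_increasing kbr); rewrite ?groupV //.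
  move=> I J JI Ib Ik; have IJ : I != J by apply/eqP=> E; move: JI; rewrite E; lia.
  case: ltgtP => [// | lt | /ht_inj/perm_inj[] /eqP]; last by rewrite eq_sym (negbTE IJ).
  by case/eqP: (swap_asc I J JI Ib Ik); apply: ninv_mul_swap.
move=> J Jend kJ; case: ltgtP => [// | lt | E]; last by case/eqP: (ht_neq0 (w^-1 (J, false))).
by case/eqP: (sign_asc J Jend kJ); apply: ninv_mul_sign.
Qed.

Lemma ninv_descent b w : (b <= r)%N -> w \in Wblock b -> w != 1 ->
  exists2 c, c \in simple_refls b & ninv b w = (ninv b (w * c)).+2.
Proof.
move=> br wB w1.
have [/exists_inP[c cS /eqP] | /exists_inPn noDesc] :=
  boolP [exists c in simple_refls b, ninv b w == (ninv b (w * c)).+2]; first by exists c.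
case/eqP: w1; apply/invg_inj; rewrite invg1.
(* For k = 0 every pair is a Levi pair. *)
apply: ht_increasing_perm1 => x y; apply: (@nondescent_levi_increasing b 0) => //.
- by move=> I J JI Ib _; apply: noDesc; apply: simple_refls_swap.
- by move=> J Jend _; apply: noDesc; apply: simple_refls_sign.
Qed.

Lemma word_of_ninv b w : (b <= r)%N -> w \in Wblock b ->
  exists2 m, ninv b w = (2 * m)%N & word_of (simple_refls b) w m.
Proof.
move=> br; move En : (ninv b w) => n; elim/ltn_ind: n w En => n IHn w En wB.
have [w1 | w1] := eqVneq w 1.
  by exists 0%N; [rewrite -En w1; apply: ninv1 | exists [::]; rewrite big_nil w1].
have [c cS wc] := ninv_descent br wB w1.
have wcB : w * c \in Wblock b by rewrite groupM // (subsetP (simple_refls_Wblock b)).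
have lt_wc : (ninv b (w * c) < n)%N by rewrite -En wc.
have [m wcm [t [tS tm tw]]] := IHn _ lt_wc (w * c) erefl wcB.
exists m.+1; first by rewrite -En wc wcm; lia.
exists (rcons t c); split; first by rewrite all_rcons tS andbT; exact: cS.
  by rewrite size_rcons tm.
have wcc : w * c * c = w by rewrite -mulgA (simple_refls_invol cS) mulg1.
by rewrite -cats1 big_cat big_seq1 tw; exact: wcc.
Qed.

Lemma minrep_ninvP b (H : {set {perm idx r}}) w :
  (b <= r)%N -> H \subset Wblock b -> w \in Wblock b ->
  minrep (simple_refls b) H w <-> {in w *: H, forall v, (ninv b w <= ninv b v)%N}.
Proof.
move=> br HB wB; have cosetB v : v \in w *: H -> v \in Wblock b.
  by rewrite mem_lcoset => /(subsetP HB) /(groupM wB); rewrite mulKVg.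
split=> [wmin v vH | wmin v vH n vn].
  have [m vm wordv] := word_of_ninv br (cosetB v vH).
  have [m' m'm wordw] := wmin v vH m wordv.
  by have := ninv_word_le wordw; lia.
have [m wm wordw] := word_of_ninv br wB; exists m => //.
by have := ninv_word_le vn; have := wmin v vH; lia.
Qed.

End SignedPermutations.

Section Reflections.
Local Close Scope group_scope.
Variable r : nat.
Implicit Types (I J : 'I_r) (x : idx r) (a l : weight r) (c t : {perm idx r}).

Lemma ffunMzE l z n : (l *~ n) z = l z * n.
Proof. by case: n => n; rewrite /= ?ffunE ffunMnE -mulrzz. Qed.

Lemma wtE x (z : 'I_r) : wt x z = (if x.2 then -1 else 1) * ((z : nat) == x.1)%:Z.
Proof. by rewrite /wt; case: x.2; rewrite !ffunE ?mulN1r ?mul1r. Qed.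

Lemma wt_inj : injective (@wt r).
Proof.
move=> [X e] [Y e'] /(congr1 (fun l : weight r => l X)); rewrite !wtE /= eqxx.
by case: (@eqP nat X Y) => [/val_inj <- | _]; case: e e' => [] [] //= E; exfalso; lia.
Qed.

Lemma sref_short I J x : J = I.+1 :> nat ->
  sref (eps r I - eps r I.+1) (wt x) = wt (swap_perm I J x).
Proof.
move=> JI; set a := eps r I - eps r I.+1.
have aE z : a z = ((z : nat) == I)%:Z - ((z : nat) == I.+1)%:Z by rewrite !ffunE.
have dotwa l : dotw l a = l I - l J.
  rewrite /dotw (bigD1 I) //= (bigD1 J) /=; last by apply/eqP=> E; move: JI; rewrite E; lia.
  rewrite big1 ?addr0 => [|j /andP[jI jJ]]; last first.
    by rewrite aE -JI (negbTE (jI : (j : nat) != I)) (negbTE (jJ : (j : nat) != J)) subrr mulr0.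
  by rewrite !aE -JI !eqxx; case_nat_eqs; lia.
rewrite /sref !dotwa !aE -JI !eqxx; case_nat_eqs; try lia.
rewrite (_ : 2 * _ = (wt x I - wt x J) * 2); last by lia.
rewrite mulzK //; apply/ffunP=> z; rewrite !ffunE ffunMzE aE !wtE swap_permE.
case: x => X e; rewrite /swap_idx /= !(fun_if (@nat_of_ord r)) -!val_eqE /= -JI.
have := ltn_ord X; have := ltn_ord I; have := ltn_ord J; have := ltn_ord z.
by case: e; case_nat_eqs; lia.
Qed.

Lemma sref_long J x : sref (eps r J *+ 2) (wt x) = wt (sign_perm J x).
Proof.
set a := eps r J *+ 2.
have aE z : a z = ((z : nat) == J)%:Z *+ 2 by rewrite ffunMnE ffunE.
have dotwa l : dotw l a = l J * 2.
  rewrite /dotw (bigD1 J) //= big1 ?addr0 ?aE ?eqxx // => j jJ.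
  by rewrite aE (negbTE (jJ : (j : nat) != J)) mul0rn mulr0.
rewrite /sref !dotwa aE eqxx (_ : 2 * _ = wt x J * (2 * 2)); last by lia.
rewrite mulzK //; apply/ffunP=> z; rewrite !ffunE ffunMzE aE !wtE sign_permE.
case: x => X e; rewrite /flip -!val_eqE /=.
have := ltn_ord X; have := ltn_ord J; have := ltn_ord z.
by case: e; case_nat_eqs; rewrite /= ?mulr2n; lia.
Qed.

Lemma reflset1 a c : c \in Weyl r -> (forall x, sref a (wt x) = wt (c x)) ->
  reflset a = [set c].
Proof.
move=> cW ac; apply/setP=> t; apply/setIdP/set1P => [[_ /forallP tE] | ->].
  by apply/permP=> x; apply: wt_inj; rewrite -ac; apply/eqP/tE.
by split=> //; apply/forallP=> x; rewrite ac.
Qed.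

Lemma reflset_short I J : J = I.+1 :> nat ->
  reflset (eps r I - eps r I.+1) = [set swap_perm I J].
Proof.
move=> JI; apply: reflset1 => [|x]; last exact: sref_short.
by apply/WeylP=> x; rewrite !swap_permE.
Qed.

Lemma reflset_long J : reflset (eps r J *+ 2) = [set sign_perm J].
Proof.
apply: reflset1 => [|x]; last exact: sref_long.
exact: Wblock_Weyl (sign_perm_Wblock 0 J).
Qed.

Lemma alpha_short i : (i.+1 < r)%N -> alpha r i = eps r i - eps r i.+1.
Proof. by move=> ir; rewrite /alpha ir. Qed.

Lemma alpha_long i : ~~ (i.+1 < r)%N -> alpha r i = eps r i *+ 2.
Proof. by move=> ri; rewrite /alpha (negbTE ri). Qed.

Lemma Ssimple_refls : Ssimple r = simple_refls r 0.
Proof.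
apply/setP=> c; apply/bigcupP/idP => [[i _] | cS].
  case: (ltnP i.+1 r) => [ir | ri].
    rewrite alpha_short // [reflset _](@reflset_short i (Ordinal ir)) // => /set1P ->.
    exact: simple_refls_swap.
  rewrite alpha_long -?ltnNge // reflset_long => /set1P ->.
  by apply: simple_refls_sign; have := ltn_ord i; lia.
case: (simple_reflsP cS) => [I J JI _ | J Jend].
  by exists I => //; rewrite alpha_short ?(reflset_short JI) ?set11 // -JI.
by exists J => //; rewrite alpha_long ?reflset_long ?set11 //; move: Jend; lia.
Qed.

Lemma msimple_long s : (0 < s < r)%N ->
  (\sum_(s.-1 <= i < r.-1) alpha r i) *+ 2 + alpha r r.-1 = eps r s.-1 *+ 2.
Proof.
move=> s_gt0r; rewrite (@telescope_sumr_eq _ _ _ (fun i => - eps r i)); first last.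
- by move=> i ir; rewrite alpha_short ?opprK 1?addrC //; lia.
- lia.
rewrite alpha_long; last lia.
by rewrite opprK -mulrnDl [X in X *+ 2]addrC addNKr.
Qed.

Lemma SM_refls s : (0 < s < r)%N -> SM r s = simple_refls r s.
Proof.
move=> s_gt0r; apply/setP=> c; rewrite /SM mem_bigcup_seq.
apply/hasP/idP => [[a aM cR] | cS].
  move: aM; rewrite /msimple !mem_cat inE => /or3P[/mapP[i] | /eqP aE | /mapP[i]].
  - rewrite mem_iota => ils aE.
    have ir : (i < r)%N by lia.
    have i1r : (i.+1 < r)%N by lia.
    move: cR; rewrite aE alpha_short // [reflset _](@reflset_short (Ordinal ir) (Ordinal i1r)) //.
    by move=> /set1P ->; apply: simple_refls_swap => /=; lia.
  - have s1r : (s.-1 < r)%N by lia.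
    move: cR; rewrite aE msimple_long // [reflset _](reflset_long (Ordinal s1r)).
    by move=> /set1P ->; apply: simple_refls_sign => /=; lia.
  rewrite mem_iota => isr aE.
  have ir : (i < r)%N by lia.
  case: (ltnP i.+1 r) => [i1r | ri].
    move: cR; rewrite aE alpha_short // [reflset _](@reflset_short (Ordinal ir) (Ordinal i1r)) //.
    by move=> /set1P ->; apply: simple_refls_swap => /=; lia.
  move: cR; rewrite aE alpha_long -?ltnNge // [reflset _](reflset_long (Ordinal ir)).
  by move=> /set1P ->; apply: simple_refls_sign => /=; lia.
rewrite /msimple; case: (simple_reflsP cS) => [I J JI Is | J Jend].
  exists (alpha r I); last by rewrite alpha_short ?(reflset_short JI) ?set11 // -JI.
  rewrite !mem_cat; apply/or3P; case: (ltnP J s) => Js.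
    by constructor 1; apply/mapP; exists (I : nat); rewrite // mem_iota; lia.
  by constructor 3; apply/mapP; exists (I : nat); rewrite // mem_iota; move: Is; have := ltn_ord J; lia.
case/orP: Jend => /eqP Jend.
  exists ((\sum_(s.-1 <= i < r.-1) alpha r i) *+ 2 + alpha r r.-1).
    by rewrite !mem_cat inE eqxx orbT.
  by rewrite msimple_long // -Jend /= reflset_long set11.
exists (alpha r J); last by rewrite alpha_long ?reflset_long ?set11 // Jend ltnn.
rewrite !mem_cat; apply/or3P; constructor 3; apply/mapP; exists (J : nat); rewrite // mem_iota.
by move: s_gt0r; lia.
Qed.

Section Tau.
Variable s : nat.

Lemma tau_sqr (i : 'I_r) : tau s i * tau s i = 1.
Proof. by rewrite /tau; case: ifP. Qed.

Lemma chartauD l l' : chartau s (l + l') = chartau s l * chartau s l'.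
Proof.
rewrite /chartau -big_split; apply: eq_bigr => i _; rewrite ffunE exprzDr //.
by rewrite /tau; case: ifP; rewrite ?unitrN1 ?unitr1.
Qed.

Lemma chartau0 : chartau s (0 : weight r) = 1.
Proof. by rewrite /chartau big1 // => i _; rewrite ffunE expr0z. Qed.

Lemma chartauN1 l : chartau s l = 1 -> chartau s (- l) = 1.
Proof. by move=> h; have := chartauD l (- l); rewrite addrN chartau0 h mul1r. Qed.

Lemma chartauMz l n : chartau s l = 1 -> chartau s (l *~ n) = 1.
Proof.
have chartauMn m : chartau s l = 1 -> chartau s (l *+ m) = 1.
  by move=> h; elim: m => [|m IHm]; rewrite ?mulr0n ?chartau0 // mulrS chartauD h IHm mulr1.
by case: n => n h /=; [exact: chartauMn | apply/chartauN1/chartauMn].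
Qed.

Lemma chartau_sref a l : chartau s a = 1 -> chartau s (sref a l) = chartau s l.
Proof. by move=> h; rewrite /sref chartauD chartauN1 ?mulr1 // chartauMz. Qed.

Lemma chartau_eps (i : 'I_r) : chartau s (eps r i) = tau s i.
Proof.
rewrite /chartau (bigD1 i) //= big1 ?mulr1 => [|j ji]; first by rewrite ffunE eqxx expr1z.
by rewrite ffunE (negbTE (ji : (j : nat) != i)).
Qed.

Lemma chartau_wt x : chartau s (wt x) = tau s x.1.
Proof.
rewrite /wt; case: x.2; last exact: chartau_eps.
have := chartauD (eps r x.1) (- eps r x.1); rewrite addrN chartau0 chartau_eps.
by rewrite /tau; case: ifP => _ h; lia.
Qed.

Lemma reflset_block a t x : chartau s a = 1 -> t \in reflset a ->
  ((t x).1 < s)%N = (x.1 < s)%N.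
Proof.
move=> a1 /setIdP[_ /forallP tE]; have := chartau_wt (t x).
by rewrite (eqP (tE x)) chartau_sref // chartau_wt /tau; case: ifP; case: ifP.
Qed.

Lemma WM_Wblock : WM r s \subset Wblock r s.
Proof.
rewrite /WM gen_subG; apply/bigcupsP=> p /andP[_ /eqP p1]; apply/subsetP=> t tR.
apply/WblockP; split; first by case/setIdP: tR.
by move=> x; apply: reflset_block p1 tR.
Qed.

Lemma simple_refls_WM : simple_refls r s \subset WM r s.
Proof.
apply/subsetP=> c /simple_reflsP[I J JI Is | J _]; apply: mem_gen; apply/bigcupP.
  have IJ : (I == J) = false by apply/eqP=> E; move: JI; rewrite E; lia.
  exists (I, J, false, true); last by rewrite /rootOf /= JI (reflset_short JI) set11.
  rewrite /rootParam /= IJ /= /rootOf /= chartauD -[- eps r J]/(wt (J, true)).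
  rewrite chartau_eps chartau_wt /= (_ : tau s J = tau s I) ?tau_sqr //.
  by rewrite /tau JI (_ : (I.+1 < s)%N = (I < s)%N) //; move: Is; lia.
exists (J, J, false, false); last by rewrite /rootOf /= -mulr2n reflset_long set11.
by rewrite /rootParam /= eqxx /rootOf /= chartauD chartau_eps tau_sqr.
Qed.

End Tau.

(* As a set of signed permutations W_P = S_k x W(C_{r-k}); the inclusion
   WP r k \subset Wlevi k is all that is needed. *)
Definition Wlevi k : {set {perm idx r}} :=
  [set w in Wblock r k | [forall x : idx r, (x.1 < k)%N ==> ((w x).2 == x.2)]].

Lemma WleviP k w : reflect (w \in Wblock r k /\ forall x, (x.1 < k)%N -> (w x).2 = x.2)
  (w \in Wlevi k).
Proof.
apply: (iffP setIdP) => -[wB wE]; split=> //.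
  by move=> x xk; apply/eqP; move/forallP/(_ x): wE; rewrite xk.
by apply/forallP=> x; apply/implyP=> xk; rewrite wE.
Qed.

Lemma Wlevi_group_set k : group_set (Wlevi k).
Proof.
apply/group_setP; split; first by apply/WleviP; split=> [|x _]; rewrite ?group1 ?perm1.
move=> u v /WleviP[uB uE] /WleviP[vB vE]; apply/WleviP; split; first by rewrite groupM.
by move=> x xk; rewrite permM vE ?uE // (Wblock_block _ uB).
Qed.
Canonical Wlevi_group k := Group (Wlevi_group_set k).

Lemma WP_Wlevi k : (k <= r)%N -> WP r k \subset Wlevi k.
Proof.
move=> kr; rewrite /WP gen_subG; apply/bigcupsP=> i ik; apply/subsetP=> t.
case: (ltnP i.+1 r) => [ir | ri].
  rewrite alpha_short // [reflset _](@reflset_short i (Ordinal ir)) // => /set1P ->.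
  apply/WleviP; split; first by apply: swap_perm_Wblock => /=; move: ik; lia.
  by move=> x _; rewrite swap_permE.
rewrite alpha_long -?ltnNge // reflset_long => /set1P ->.
apply/WleviP; split=> [|x xk]; first exact: sign_perm_Wblock.
by rewrite sign_permE; case: eqP => // xi; move: xk ri ik; rewrite xi; have := ltn_ord i; lia.
Qed.

Lemma swap_perm_WP k I J : J = I.+1 :> nat -> I.+1 != k -> swap_perm I J \in WP r k.
Proof.
move=> JI Ik; apply: mem_gen; apply/bigcupP; exists I => //.
by rewrite alpha_short ?(reflset_short JI) ?set11 // -JI.
Qed.

Lemma sign_permJ I J : J = I.+1 :> nat -> sign_perm I = (sign_perm J ^ swap_perm I J)%g.
Proof.
move=> JI; have IJ : I != J by apply/eqP=> E; move: JI; rewrite E; lia.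
by rewrite /sign_perm tpermJ !swap_permE !swap_idxR.
Qed.

Lemma sign_perm_WP k J : (k <= J)%N -> sign_perm J \in WP r k.
Proof.
have [n Jn] : exists n, (J + n)%N = r.-1 by exists (r.-1 - J)%N; have := ltn_ord J; lia.
elim: n J Jn => [|n IHn] J Jn kJ.
  apply: mem_gen; apply/bigcupP; exists J; first by apply/eqP; lia.
  by rewrite alpha_long ?reflset_long ?set11 //; have := ltn_ord J; lia.
have J1r : (J.+1 < r)%N by lia.
rewrite (@sign_permJ J (Ordinal J1r)) // groupJ //.
  by apply: IHn => /=; lia.
by apply: swap_perm_WP => //=; lia.
Qed.

End Reflections.

Section LeviCosets.
Variables r k : nat.
Implicit Types (x y : idx r) (g w : {perm idx r}).

Lemma Wlevi_ht_lt g x y : g \in Wlevi r k -> ~~ levi_pair k x y ->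
  ht x < ht y -> ht (g x) < ht (g y).
Proof.
case/WleviP=> gB gE; rewrite /levi_pair negb_or.
have := Wblock_block x gB; have := Wblock_block y gB; have := gE x; have := gE y.
case: x y => [i e] [j e'] /=; case: (g (i, e)) (g (j, e')) => [i' f] [j' f'] /=.
rewrite /ht /=; have := ltn_ord i; have := ltn_ord j; have := ltn_ord i'; have := ltn_ord j'.
by case: e e' f f' => [] [] [] []; lia.
Qed.

Lemma ninv_mul_Wlevi w g : w \in Weyl r -> levi_increasing k w^-1 -> g \in Wlevi r k ->
  (ninv 0 w <= ninv 0 (w * g))%N.
Proof.
move=> wW wlevi gL; have gW : g \in Weyl r by case/WleviP: gL => /Wblock_Weyl.
have wiW : w^-1 \in Weyl r by move: wW; rewrite !Weyl_Wblock0 groupV.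
have keep x y : 0 < ht x + ht y -> ht (w x) + ht (w y) < 0 ->
    ht (g (w x)) + ht (g (w y)) < 0.
  move=> pos neg; have XY : ht (w x) < ht (flip (w y)) by rewrite ht_flip; lia.
  have wXY : ht (w^-1 (flip (w y))) < ht (w^-1 (w x)).
    by rewrite (Weyl_flip _ wiW) ht_flip !permK; lia.
  have nlp : ~~ levi_pair k (w x) (flip (w y)).
    by apply: contraL wXY => lp; rewrite -leNgt ltW // wlevi.
  by have := Wlevi_ht_lt gL nlp XY; rewrite (Weyl_flip _ gW) ht_flip; lia.
rewrite /ninv leq_add // subset_leq_card //; apply/subsetP.
  by move=> [x y]; rewrite !inE /= !permM => /andP[pos neg]; rewrite pos keep.
by move=> x; rewrite !inE permM => /andP[pos neg]; rewrite pos /=; have := keep x x; lia.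
Qed.

Lemma WQ_min_levi_increasing s w : (k <= s <= r)%N -> w \in Wblock r s ->
  {in w *: WQ r s k, forall v, (ninv s w <= ninv s v)%N} -> levi_increasing k w^-1.
Proof.
move=> ksr wB wmin; have WQ_coset c : c \in WQ r s k -> w * c \in w *: WQ r s k.
  by rewrite mem_lcoset mulKg.
apply: (nondescent_levi_increasing ksr wB) => [I J JI Is Ik | J Jend kJ].
  have cQ : swap_perm I J \in WQ r s k.
    by rewrite inE (subsetP (simple_refls_WM r s)) ?simple_refls_swap ?swap_perm_WP.
  by have := wmin _ (WQ_coset _ cQ); lia.
have cQ : sign_perm J \in WQ r s k.
  by rewrite inE (subsetP (simple_refls_WM r s)) ?simple_refls_sign ?sign_perm_WP.
by have := wmin _ (WQ_coset _ cQ); lia.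
Qed.

End LeviCosets.

Theorem mainTheorem5 (r s k : nat) :
  (1 <= k)%N -> (k <= s)%N -> (s < r)%N ->
  forall w : {perm idx r}, @in_WMQ_min r s k w -> @in_WP_min r k w.
Proof.
move=> k1 ks sr w [wM wmin].
have ksr : (k <= s <= r)%N by rewrite ks ltnW.
have kr : (k <= r)%N by lia.
have wB : w \in Wblock r s := subsetP (WM_Wblock r s) w wM.
have WQ_B : WQ r s k \subset Wblock r s := subset_trans (subsetIl _ _) (WM_Wblock r s).
have WP_W : WP r k \subset Wblock r 0.
  by apply/subsetP=> g /(subsetP (WP_Wlevi kr)) /WleviP[/Wblock_Weyl]; rewrite Weyl_Wblock0.
rewrite SM_refls ?(leq_trans k1 ks) // in wmin.
have wlevi : levi_increasing k w^-1.
  by apply: (WQ_min_levi_increasing ksr wB); apply/(minrep_ninvP (ltnW sr) WQ_B wB).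
have wW : w \in Weyl r := Wblock_Weyl wB.
split=> //; rewrite Ssimple_refls; apply/(minrep_ninvP (leq0n r) WP_W); first by rewrite -Weyl_Wblock0.
move=> v; rewrite mem_lcoset => gP; rewrite -(mulKVg w v).
exact: ninv_mul_Wlevi wW wlevi (subsetP (WP_Wlevi kr) _ gP).
Qed.
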